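(* Let $q$ be a vertex-labelled query hypergraph with labelling $l_q$ and $H$ a vertex-labelled data hypergraph with labelling $l_H$. Let $q'$ be a partial query of $q$ with hyperedges $e_1,\dots,e_k$ (in matching order), and let $e_{q'}=e_k$ be its last hyperedge. Let $m'$ be a partial embedding of $q'$, i.e. an injective assignment $f(e_i)\in E(H)$ ($1\le i\le k$), and write $e_{m'}=f(e_k)$. Assume that the partial embedding $m=(f(e_1),\dots,f(e_{k-1}))$ is a valid embedding of the partial query $q''$ formed by $e_1,\dots,e_{k-1}$. Then $m'$ is a valid embedding of $q'$ if and only if the two multisets $$\{\mathcal{P}_{q'\rightarrow m'}(u) : u\in e_{q'}\} \quad\text{and}\quad \{\mathcal{P}(v) : v\in e_{m'}\}$$ are equal.
   Context: A hypergraph consists of a vertex set and a set of hyperedges, each a nonempty subset of the vertex set; vertices carry labels. A partial query $q'$ is the subhypergraph of $q$ formed by a set of query hyperedges together with the vertices they contain. For a partial embedding $m'$ (an injective map $f$ from $E(q')$ to $E(H)$), $H_{m'}$ denotes the subhypergraph of $H$ consisting of the data hyperedges $f(e)$, $e\in E(q')$, and the vertices they contain. The partial embedding $m'$ is valid (an embedding of $q'$) if there exists a bijection $g:V(q')\to V(H_{m'})$ with $l_H(g(u))=l_q(u)$ for all $u\in V(q')$ and $g(e)=f(e)$ (as vertex sets) for every $e\in E(q')$. For a data vertex $v\in V(H_{m'})$, its vertex profile is $\mathcal{P}(v)=(l_H(v),\, he_{H_{m'}}(v))$, where $he_{H_{m'}}(v)$ is the set of hyperedges of $H_{m'}$ containing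 $v$. For a query vertex $u\in V(q')$, $\mathcal{P}_{q'\rightarrow m'}(u)=(l_q(u),\,\{f(e): e\in he_{q'}(u)\})$, where $he_{q'}(u)$ is the set of hyperedges of $q'$ containing $u$. *)

From mathcomp Require Import all_boot.
Set Implicit Arguments. Unset Strict Implicit. Unset Printing Implicit Defensive.

(* A hyperedge is a finite set of vertices. A (partial) query is given by the
   sequence of its hyperedges in matching order. *)

Definition vset (T : finType) (E : seq {set T}) : {set T} := \bigcup_(e <- E) e.

Definition is_embedding (Vq Vh : finType) (L : eqType)
    (lq : Vq -> L) (lH : Vh -> L) (E : seq {set Vq}) (f : {set Vq} -> {set Vh}) : Prop :=
  exists g : Vq -> Vh,
    [/\ {in vset E &, injective g},
        g @: vset E = vset (map f E),
        {in vset E, forall u, lH (g u) = lq u} &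
        (forall e : {set Vq}, e \in E -> g @: e = f e)].

Definition qprofile (Vq Vh : finType) (L : eqType) (lq : Vq -> L)
    (f : {set Vq} -> {set Vh}) (E : seq {set Vq}) (u : Vq) : L * {set {set Vh}} :=
  (lq u, f @: [set e : {set Vq} | (e \in E) && (u \in e)]).

Definition dprofile (Vh : finType) (L : eqType) (lH : Vh -> L)
    (F : seq {set Vh}) (v : Vh) : L * {set {set Vh}} :=
  (lH v, [set e : {set Vh} | (e \in F) && (v \in e)]).

From mathcomp Require Import all_boot.

Set Implicit Arguments.
Unset Strict Implicit.
Unset Printing Implicit Defensive.

(* A valid embedding is the same as a label- and incidence-preserving matching
   of vertices, and such a matching exists iff every nonempty profile is
   carried by as many query vertices as data vertices.  Adding the last
   hyperedge [ek] splits each old profile class into the vertices outside [ek],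
   whose profile is unchanged, and those inside, whose profile gains the fresh
   edge [f ek].  As the class sizes for [es] already agree, the class sizes for
   [rcons es ek] agree iff they agree on the vertices of [ek] and [f ek], i.e.
   iff the two profile multisets coincide. *)

Lemma vsetP (T : finType) (E : seq {set T}) u :
  reflect (exists2 e, e \in E & u \in e) (u \in vset E).
Proof. by rewrite /vset bigcup_seq; apply: (iffP bigcupP) => -[e]; exists e. Qed.

Lemma count_enum_set (T : finType) (A : {set T}) (P : pred T) :
  count P (enum A) = #|[set u in A | P u]|.
Proof.
rewrite -size_filter cardE; apply/perm_size/uniq_perm.
- by rewrite filter_uniq ?enum_uniq.
- exact: enum_uniq.
by move=> u; rewrite mem_filter !mem_enum !inE andbC.
Qed.

Lemma perm_map_enumP (T1 T2 : finType) (X : eqType) (p : T1 -> X) (d : T2 -> X)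
    (A : {set T1}) (B : {set T2}) :
  reflect (forall x, #|[set u in A | p u == x]| = #|[set v in B | d v == x]|)
          (perm_eq [seq p u | u <- enum A] [seq d v | v <- enum B]).
Proof.
have count_fiber (T : finType) (q : T -> X) (C : {set T}) x :
    count_mem x [seq q u | u <- enum C] = #|[set u in C | q u == x]|.
  by rewrite count_map count_enum_set.
apply: (iffP idP) => [/permP eq_count x | eq_card].
  by rewrite -!count_fiber eq_count.
by apply/allP => x _; rewrite /= !count_fiber eq_card.
Qed.

Lemma fiber_matching (T1 T2 : finType) (X : eqType) (p : T1 -> X) (d : T2 -> X)
    (P : pred X) (v0 : T2) :
  (forall x, P x -> #|[set u | p u == x]| = #|[set v | d v == x]|) ->
  exists g : T1 -> T2,
    [/\ {in [pred u | P (p u)], forall u, d (g u) = p u},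
        {in [pred u | P (p u)] &, injective g} &
        forall v, P (d v) -> exists2 u, P (p u) & g u = v].
Proof.
move=> eq_fiber.
pose A x := enum [set u | p u == x]; pose B x := enum [set v | d v == x].
have size_AB x : P x -> size (A x) = size (B x) by move=> Px; rewrite -!cardE eq_fiber.
have memA u x : (u \in A x) = (p u == x) by rewrite mem_enum inE.
have memB v x : (v \in B x) = (d v == x) by rewrite mem_enum inE.
pose g u := nth v0 (B (p u)) (index u (A (p u))).
have index_lt u : P (p u) -> index u (A (p u)) < size (B (p u)).
  by move=> Pu; rewrite -size_AB // index_mem memA.
have dg : {in [pred u | P (p u)], forall u, d (g u) = p u}.
  by move=> u /index_lt /(mem_nth v0); rewrite memB => /eqP.
exists g; split=> // [u1 u2 Pu1 Pu2 eq_g | v Pv].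
  have eq_p : p u1 = p u2 by rewrite -dg // eq_g dg.
  have lt1 := index_lt u1 Pu1; rewrite eq_p in lt1.
  move/eqP: eq_g; rewrite /g eq_p nth_uniq ?enum_uniq ?index_lt // => /eqP eq_i.
  have u1A : u1 \in A (p u2) by rewrite memA eq_p.
  by rewrite -(nth_index u1 u1A) eq_i nth_index // memA.
set x := d v.
have lt_v : index v (B x) < size (A x) by rewrite size_AB // index_mem memB.
have [u0 _] : exists u0 : T1, true by case: (A x) lt_v => // u0 _ _; exists u0.
set u := nth u0 (A x) (index v (B x)).
have pu : p u = x by apply/eqP; rewrite -memA mem_nth.
by exists u; rewrite ?pu // /g pu index_uniq ?enum_uniq // nth_index // memB.
Qed.

Definition add_edge (L : eqType) (S : finType) (a : S) (b : bool) (x : L * {set S}) :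
    L * {set S} :=
  (x.1, if b then a |: x.2 else x.2).

Section Profiles.

Variables (Vq Vh : finType) (L : eqType) (lq : Vq -> L) (lH : Vh -> L).
Implicit Types (f : {set Vq} -> {set Vh}) (E : seq {set Vq}) (F : seq {set Vh}).
Implicit Types (u : Vq) (v : Vh).

Lemma qprofile_neq0 f E u : ((qprofile lq f E u).2 != set0) = (u \in vset E).
Proof.
rewrite /= imset_eq0; apply/set0Pn/vsetP => [[e]|[e Ee ue]].
  by rewrite inE => /andP[]; exists e.
by exists e; rewrite inE Ee.
Qed.

Lemma dprofile_neq0 F v : ((dprofile lH F v).2 != set0) = (v \in vset F).
Proof.
apply/set0Pn/vsetP => [[e]|[e Fe ve]].
  by rewrite inE => /andP[]; exists e.
by exists e; rewrite inE Fe.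
Qed.

Lemma mem_qprofile f E u e : e \in (qprofile lq f E u).2 -> e \in map f E.
Proof. by case/imsetP => e' /[!inE] /andP[Ee' _] ->; apply: map_f. Qed.

Lemma mem_dprofile F v e : e \in (dprofile lH F v).2 -> e \in F.
Proof. by rewrite inE => /andP[]. Qed.

Lemma qprofile_rcons f E ek u :
  qprofile lq f (rcons E ek) u = add_edge (f ek) (u \in ek) (qprofile lq f E u).
Proof.
rewrite /qprofile /add_edge /=; congr pair.
set S := [set e | (e \in E) && (u \in e)].
have -> : [set e | (e \in rcons E ek) && (u \in e)] = if u \in ek then ek |: S else S.
  apply/setP => e; case: (boolP (u \in ek)) => uek; rewrite !inE mem_rcons in_cons.
    by case: (e =P ek) => [->|].
  by case: (e =P ek) => [->|]; rewrite ?(negPf uek) ?andbF.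
by case: ifP; rewrite ?imsetU1.
Qed.

Lemma dprofile_rcons F a v :
  dprofile lH (rcons F a) v = add_edge a (v \in a) (dprofile lH F v).
Proof.
rewrite /dprofile /add_edge /=; congr pair; apply/setP => e.
rewrite !inE mem_rcons in_cons; case: (boolP (v \in a)) => va; rewrite ?inE.
  by case: (e =P a) => [->|].
by case: (e =P a) => [->|]; rewrite ?(negPf va) ?andbF.
Qed.

Lemma dprofile_embedding f E (g : Vq -> Vh) :
    {in vset E &, injective g} -> {in vset E, forall u, lH (g u) = lq u} ->
    (forall e, e \in E -> g @: e = f e) ->
  {in vset E, forall u, dprofile lH (map f E) (g u) = qprofile lq f E u}.
Proof.
move=> g_inj g_lab g_edge u uE; rewrite /dprofile /qprofile g_lab //; congr pair.
apply/setP => e'; rewrite !inE; apply/andP/imsetP => [[/mapP[e Ee ->] gue] | [e]].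
  exists e => //; rewrite inE Ee /=.
  move: gue; rewrite -g_edge // => /imsetP[u' u'e eq_g].
  have u'E : u' \in vset E by apply/vsetP; exists e.
  by rewrite (g_inj _ _ uE u'E eq_g).
rewrite inE => /andP[Ee ue] ->.
by split; [apply: map_f | rewrite -g_edge // imset_f].
Qed.

Lemma embedding_fiber_card f E : is_embedding lq lH E f ->
  forall x, x.2 != set0 ->
  #|[set u | qprofile lq f E u == x]| = #|[set v | dprofile lH (map f E) v == x]|.
Proof.
move=> [g [g_inj g_vset g_lab g_edge]] x x_neq0.
have dg := dprofile_embedding g_inj g_lab g_edge.
have fiber_sub : {subset [set u | qprofile lq f E u == x] <= vset E}.
  by move=> u; rewrite inE -(qprofile_neq0 f) => /eqP->.
rewrite -(card_in_imset (f := g)); last first.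
  by move=> u1 u2 /fiber_sub u1E /fiber_sub u2E; apply: g_inj.
apply: eq_card => v; rewrite inE; apply/imsetP/eqP => [[u fu ->] | dv].
  by rewrite dg ?fiber_sub //; move: fu; rewrite inE => /eqP.
have : v \in vset (map f E) by move: x_neq0; rewrite -dv dprofile_neq0.
rewrite -g_vset => /imsetP[u uE def_v]; exists u => //.
by rewrite inE -dg // -def_v dv.
Qed.

Lemma fiber_card_embedding f E (v0 : Vh) : {in E &, injective f} ->
  (forall x, x.2 != set0 ->
    #|[set u | qprofile lq f E u == x]| = #|[set v | dprofile lH (map f E) v == x]|) ->
  is_embedding lq lH E f.
Proof.
move=> f_inj /(fiber_matching (P := fun x => x.2 != set0) v0)[g [dg g_inj g_surj]].
have {}dg u : u \in vset E -> dprofile lH (map f E) (g u) = qprofile lq f E u.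
  by move=> uE; apply: dg; rewrite inE /= qprofile_neq0.
have {}g_inj : {in vset E &, injective g}.
  by move=> u1 u2 u1E u2E; apply: g_inj; rewrite inE /= qprofile_neq0.
have {}g_surj v : v \in vset (map f E) -> exists2 u, u \in vset E & g u = v.
  by rewrite -dprofile_neq0 => /g_surj[u]; rewrite qprofile_neq0; exists u.
exists g; split=> //.
- apply/setP => v; apply/imsetP/idP => [[u uE ->] | /g_surj[u uE <-]]; last by exists u.
  by rewrite -dprofile_neq0 dg // qprofile_neq0.
- by move=> u uE; apply: (congr1 fst (dg u uE)).
move=> e Ee; apply/setP => v; apply/imsetP/idP => [[u ue ->] | vfe].
  have uE : u \in vset E by apply/vsetP; exists e.
  have : f e \in (dprofile lH (map f E) (g u)).2 by rewrite dg // imset_f // inE Ee.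
  by rewrite inE => /andP[].
have vE : v \in vset (map f E) by apply/vsetP; exists (f e); rewrite ?map_f.
have [u uE gu] := g_surj v vE; exists u => //.
have : f e \in (qprofile lq f E u).2 by rewrite -dg // gu inE map_f.
by case/imsetP => e' /[!inE] /andP[Ee' ue'] /(f_inj _ _ Ee Ee') ->.
Qed.

Lemma embedding_fiber_cardP f E (v0 : Vh) : {in E &, injective f} ->
  is_embedding lq lH E f <->
  (forall x, x.2 != set0 ->
    #|[set u | qprofile lq f E u == x]| = #|[set v | dprofile lH (map f E) v == x]|).
Proof.
by move=> f_inj; split; [exact: embedding_fiber_card | exact: fiber_card_embedding].
Qed.

End Profiles.

Section AddEdgeFibers.

Variables (T S : finType) (L : eqType) (p p' : T -> L * {set S}) (K : {set T}) (a : S).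
Hypothesis p'E : forall u, p' u = add_edge a (u \in K) (p u).
Implicit Type x : L * {set S}.

Lemma card_fiber_add_edge_out x :
  a \notin x.2 -> #|[set u in K | p' u == x]| = 0.
Proof.
move=> ax; apply: eq_card0 => u; rewrite !inE p'E.
by case: (u \in K) => //; apply: contraNF ax => /eqP <-; rewrite setU11.
Qed.

Hypothesis a_fresh : forall u, a \notin (p u).2.

Lemma card_fiber_add_edge_in x :
  a \in x.2 -> #|[set u | p' u == x]| = #|[set u in K | p' u == x]|.
Proof.
move=> ax; apply: eq_card => u; rewrite !inE p'E.
by case: (u \in K) => //; apply: contraTF ax => /eqP <-; apply: a_fresh.
Qed.

Lemma card_fiber_add_edge_split x : a \notin x.2 ->
  #|[set u | p u == x]| =
  #|[set u | p' u == x]| + #|[set u in K | p' u == (x.1, a |: x.2)]|.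
Proof.
case: x => l X /= aX; rewrite -(cardsID K) addnC; congr (_ + _); apply: eq_card => u;
  rewrite !inE p'E /add_edge; case: (u \in K) => //=; case: (p u) (a_fresh u) => l' Y /= aY.
- by apply/esym/negbTE; apply: contra aX => /eqP[_ <-]; apply: setU11.
- rewrite andbT !xpair_eqE; congr andb; apply/eqP/eqP => [-> // | /setP eq_aYX].
  apply/setP => y; move/(_ y): eq_aYX; rewrite !inE; case: eqP => [-> _ | _ /= //].
  by rewrite (negPf aX) (negPf aY).
by rewrite andbF.
Qed.

End AddEdgeFibers.

Lemma fiber_card_add_edgeP (T1 T2 S : finType) (L : eqType)
    (p p' : T1 -> L * {set S}) (d d' : T2 -> L * {set S})
    (K1 : {set T1}) (K2 : {set T2}) (a : S) :
    (forall u, p' u = add_edge a (u \in K1) (p u)) ->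
    (forall v, d' v = add_edge a (v \in K2) (d v)) ->
    (forall u, a \notin (p u).2) -> (forall v, a \notin (d v).2) ->
    (forall x : L * {set S}, a \notin x.2 -> x.2 != set0 ->
      #|[set u | p u == x]| = #|[set v | d v == x]|) ->
  (forall x : L * {set S}, x.2 != set0 ->
    #|[set u | p' u == x]| = #|[set v | d' v == x]|) <->
  (forall x : L * {set S},
    #|[set u in K1 | p' u == x]| = #|[set v in K2 | d' v == x]|).
Proof.
move=> p'E d'E p_fresh d_fresh eq_fiber.
have p_in := card_fiber_add_edge_in p'E p_fresh.
have d_in := card_fiber_add_edge_in d'E d_fresh.
split=> [eq_fiber' x | eq_fiberK x x_neq0]; have [ax | ax] := boolP (a \in x.2).
- by rewrite -p_in // -d_in // eq_fiber' //; apply/set0Pn; exists a.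
- by rewrite (card_fiber_add_edge_out p'E ax) (card_fiber_add_edge_out d'E ax).
- by rewrite p_in // d_in.
apply: (@addIn #|[set v in K2 | d' v == (x.1, a |: x.2)]|).
rewrite -(card_fiber_add_edge_split d'E d_fresh ax) -eq_fiberK.
by rewrite -(card_fiber_add_edge_split p'E p_fresh ax) eq_fiber.
Qed.

Theorem mainTheorem1 (Vq Vh : finType) (L : eqType) (lq : Vq -> L) (lH : Vh -> L)
    (EQ : {set {set Vq}}) (EH : {set {set Vh}})
    (hEQ : forall e, e \in EQ -> e != set0)
    (hEH : forall e, e \in EH -> e != set0)
    (es : seq {set Vq}) (ek : {set Vq}) (f : {set Vq} -> {set Vh})
    (huniq : uniq (rcons es ek))
    (hsub : {subset rcons es ek <= EQ})
    (hfinj : {in rcons es ek &, injective f})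
    (hfH : {in rcons es ek, forall e, f e \in EH})
    (hm : is_embedding lq lH es f) :
  is_embedding lq lH (rcons es ek) f <->
  perm_eq [seq qprofile lq f (rcons es ek) u | u <- enum ek]
          [seq dprofile lH (map f (rcons es ek)) v | v <- enum (f ek)].
Proof.
have [v0 _] : exists v0, v0 \in f ek by apply/set0Pn/hEH/hfH; rewrite mem_rcons mem_head.
have fresh : f ek \notin map f es.
  by move: huniq; rewrite -(map_inj_in_uniq hfinj) map_rcons rcons_uniq => /andP[].
apply: (iff_trans (embedding_fiber_cardP lq lH v0 hfinj)).
apply: (iff_trans _ (rwP (perm_map_enumP _ _ _ _))).
rewrite map_rcons; apply: fiber_card_add_edgeP.
- exact: qprofile_rcons.
- exact: dprofile_rcons.
- by move=> u; apply: contra fresh; apply: mem_qprofile.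
- by move=> v; apply: contra fresh; apply: mem_dprofile.
by move=> x _; apply: embedding_fiber_card.
Qed.
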